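(* Let $G$ be a bipartite graph between $U$ and $V$ with edge weights in $\{-1,+1\}$, and let $d>0$. Suppose every $u\in U$ satisfies $|F(u)|\le 1.2d$ and $|F^+(u)|\ge 0.45d$. Let $S\subseteq U$ have the $11/12$-strong unique neighbour property, let $h=\mathbf 1_S$ and $y=\operatorname{sgn}(Gh)$, i.e. $y_v=\operatorname{sgn}\big(\sum_{u\in S,\,v\in F(u)}w(u,v)\big)$. Define $\hat h\in\{0,1\}^U$ by $\hat h_u=1$ if and only if $|\{v\in F^+(u): y_v=1\}|>0.3d$ (equivalently $\hat h=\operatorname{sgn}(M^{T}y-0.3d\,\mathbf 1)$ where $M$ is the $V\times U$ $0/1$ indicator matrix of the $+1$ edges). Then $\hat h=h$.
   Context: $\operatorname{sgn}(x)=1$ if $x>0$ and $0$ otherwise, coordinatewise. For $u\in U$, $F(u)\subseteq V$ is its set of neighbours and $F^+(u)=\{v\in F(u):w(u,v)=+1\}$; for $T\subseteq U$, $F(T)=\bigcup_{u\in T}F(u)$. For $u\in U$ and $S\subseteq U$, the unique neighbours of $u$ w.r.t. $S$ are $\mathrm{UF}(u,S)=\{v\in F(u): v\notin F(S\setminus\{u\})\}$. A node $u$ has the $(1-\epsilon)$-unique neighbour property w.r.t. $S$ if $\sum_{v\in \mathrm{UF}(u,S)}|w(u,v)|\ge(1-\epsilon)\sum_{v\in F(u)}|w(u,v)|$; the set $S$ has the $(1-\epsilon)$-strong unique neighbour property if every $u\in U$ (whether or not $u\in S$) has the $(1-\epsilon)$-unique neighbour property w.r.t. $S$. *)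

From HB Require Import structures.
From mathcomp Require Import all_boot all_order all_algebra.
Set Implicit Arguments. Unset Strict Implicit. Unset Printing Implicit Defensive.
Import Order.TTheory GRing.Theory Num.Theory.
Local Open Scope ring_scope.

(* A weighted bipartite graph between finite U and V is given by its weight
   function w : U -> V -> int; (u,v) is an edge iff w u v != 0.
   Edge weights in {-1,+1} is the hypothesis that w only takes values -1,0,1. *)
Section Graph.
Variables (U V : finType) (w : U -> V -> int).

Definition F (u : U) : {set V} := [set v | w u v != 0].
Definition Fplus (u : U) : {set V} := [set v in F u | w u v == 1].
Definition FT (T : {set U}) : {set V} := \bigcup_(u in T) F u.
Definition UF (u : U) (S : {set U}) : {set V} :=
  [set v in F u | v \notin FT (S :\ u)].

(* (1 - eps)-unique neighbour property, with c = 1 - eps *)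
Definition unique_nb_prop (R : numFieldType) (c : R) (u : U) (S : {set U}) :=
  c * (\sum_(v in F u) `|w u v|)%:~R <= (\sum_(v in UF u S) `|w u v|)%:~R :> R.

Definition strong_unique_nb_prop (R : numFieldType) (c : R) (S : {set U}) :=
  forall u : U, unique_nb_prop c u S.

Definition sgn (x : int) : bool := (0 < x)%R.

Definition yvec (S : {set U}) (v : V) : bool :=
  sgn (\sum_(u in S | v \in F u) w u v).

Definition hhat (R : numFieldType) (d : R) (S : {set U}) (u : U) : bool :=
  (3%:R / 10%:R) * d < (#|[set v in Fplus u | yvec S v]|)%:R.
End Graph.

From HB Require Import structures.
From mathcomp Require Import all_boot all_order all_algebra lra.
Set Implicit Arguments. Unset Strict Implicit. Unset Printing Implicit Defensive.
Import Order.TTheory GRing.Theory Num.Theory.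
Local Open Scope ring_scope.

(* Split the neighbourhood F(u) into the unique neighbours UF(u,S) and the
   rest N(u) = F(u) \ UF(u,S).  At a unique neighbour v of u the load
   sum_{u' in S, v in F(u')} w(u',v) is w(u,v) if u is in S and 0 otherwise,
   so y_v = 1 on F^+(u) /\ UF(u,S) when u is in S, and y_v = 0 on UF(u,S)
   when u is not in S.  Hence the decoded set {v in F^+(u) | y_v} contains
   F^+(u) \ N(u) when u is in S and lies inside N(u) otherwise.  With
   +-1 weights the 11/12-unique-neighbour property says |N(u)| <= |F(u)|/12,
   which is at most 0.1 d; comparing with 0.45 d <= |F^+(u)| and the
   threshold 0.3 d gives hhat = 1_S. *)

Section UniqueNeighbourDecoding.
Variables (U V : finType) (w : U -> V -> int).
Hypothesis hw : forall u v, w u v \in [:: -1; 0; 1].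

Definition nonUF (u : U) (S : {set U}) : {set V} := F w u :\: UF w u S.

Lemma UF_sub (u : U) (S : {set U}) : UF w u S \subset F w u.
Proof. by apply/subsetP => v; rewrite inE => /andP[]. Qed.

Lemma card_F_split (u : U) (S : {set U}) :
  #|F w u| = (#|UF w u S| + #|nonUF u S|)%N.
Proof. by rewrite -(cardsID (UF w u S) (F w u)) (setIidPr (UF_sub u S)). Qed.

Lemma sum_abs_card (R : numDomainType) (u : U) (A : {set V}) :
  A \subset F w u -> (\sum_(v in A) `|w u v|)%:~R = (#|A|%:R : R).
Proof.
move=> sAF; rewrite (eq_bigr (fun _ => 1)) ?sumr_const ?pmulrn ?intz //.
move=> v /(subsetP sAF); rewrite inE.
by have := hw u v; rewrite !inE => /or3P[] /eqP ->.
Qed.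

(* At a unique neighbour v of u only u can contribute to the load of v. *)
Lemma load_at_UF (S : {set U}) (u : U) (v : V) : v \in UF w u S ->
  \sum_(u' in S | v \in F w u') w u' v = if u \in S then w u v else 0.
Proof.
rewrite inE => /andP[vF vUF].
have others u' : u' \in S -> v \in F w u' -> u' = u.
  move=> u'S vF'; apply/eqP; apply: contraNT vUF => u'u.
  by apply/bigcupP; exists u'; rewrite // !inE u'u.
case: ifP => uS.
  rewrite (bigD1 u) /=; last by rewrite uS.
  by rewrite big1 ?addr0 // => u' /andP[/andP[u'S vF'] /eqP[]]; apply: others.
by apply: big1 => u' /andP[u'S vF']; move: uS; rewrite -(others u') ?u'S.
Qed.

Lemma card_nonUF_le (R : realFieldType) (c : R) (u : U) (S : {set U}) :
  unique_nb_prop w c u S -> (#|nonUF u S|%:R : R) <= (1 - c) * #|F w u|%:R.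
Proof.
rewrite /unique_nb_prop !sum_abs_card ?UF_sub // (card_F_split u S) natrD.
by move=> *; lra.
Qed.

Lemma decoded_large (S : {set U}) (u : U) : u \in S ->
  (#|Fplus w u| <= #|[set v in Fplus w u | yvec w S v]| + #|nonUF u S|)%N.
Proof.
move=> uS; apply: leq_trans (leq_card_setU _ _); apply: subset_leq_card.
apply/subsetP => v vP; have := vP; rewrite [v \in Fplus _ _]inE => /andP[vF /eqP wp].
rewrite in_setU [v \in nonUF _ _]inE vF andbT.
case: (boolP (v \in UF w u S)) => vU; last by rewrite orbT.
by rewrite inE vP /yvec /sgn (load_at_UF vU) uS wp.
Qed.

Lemma decoded_small (S : {set U}) (u : U) : u \notin S ->
  [set v in Fplus w u | yvec w S v] \subset nonUF u S.
Proof.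
move=> uS; apply/subsetP => v; rewrite inE => /andP[vP yv].
have vF : v \in F w u by move: vP; rewrite inE => /andP[].
rewrite inE vF andbT; apply: contraTN yv => vU.
by rewrite /yvec /sgn (load_at_UF vU) (negbTE uS) ltxx.
Qed.

End UniqueNeighbourDecoding.

Theorem mainTheorem4 (R : realFieldType) (U V : finType) (w : U -> V -> int)
  (d : R) (S : {set U})
  (hw : forall u v, w u v \in [:: -1; 0; 1])
  (hd : 0 < d)
  (hdeg : forall u : U, (#|F w u|)%:R <= (12%:R / 10%:R) * d)
  (hpos : forall u : U, (45%:R / 100%:R) * d <= (#|Fplus w u|)%:R)
  (hS : strong_unique_nb_prop w (11%:R / 12%:R : R) S) :
  forall u : U, hhat w d S u = (u \in S).
Proof.
move=> u; rewrite /hhat.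
have hN : (#|nonUF w u S|%:R : R) <= d / 10.
  have hU := card_nonUF_le hw (hS u); have hF := hdeg u; lra.
have hP := hpos u.
case: (boolP (u \in S)) => uS.
- have := decoded_large w uS; rewrite -(ler_nat R) natrD => hD.
  by apply/idP; lra.
- have := subset_leq_card (decoded_small w uS); rewrite -(ler_nat R) => hD.
  by apply/negbTE; rewrite -leNgt; lra.
Qed.
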